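(* For $i=1,\dots,M$, let $\mathcal Q_i$ be a symmetric positive semidefinite matrix and $C_i$ a matrix with full row rank (as defined in the context), let $Z_i$ be a matrix whose columns form an orthonormal basis of the null space of $C_i$, and assume $Z_i^\top\mathcal Q_iZ_i$ is positive definite and $\beta\in(0,1)$. For $\rho>0$ define \[ \Theta_i(\rho)=\Big\|\big(Z_i^\top(\tfrac1\rho\mathcal Q_i+I)Z_i\big)^{-1}-\tfrac12 I\Big\|_2 . \] Then the penalty parameters that optimize the worst-case convergence rate of Algorithm SE, i.e. that minimize $\|\tilde{\mathcal M}\|_2=\max_i\Theta_i(\rho_i)$ over $\rho_1,\dots,\rho_M>0$, are \[ \rho_i^\star=\sqrt{\operatorname{eig}_{\min}(Z_i^\top\mathcal Q_iZ_i)\,\operatorname{eig}_{\max}(Z_i^\top\mathcal Q_iZ_i)},\qquad i=1,\dots,M, \] and this choice does not depend on $\beta$.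
   Context: Setting: an MPC problem with dynamics $x^{k+1}=Ax^k+Bu^k$, horizon $N$, partitioned into subsystems $i=1,\dots,M$, is written as the stacked problem: minimize $\sum_i(\tfrac12y_i^\top\mathcal Q_iy_i+q_i^\top y_i+K_i)$ s.t. $C_iy_i=c_i$ (subsystem dynamics), $y_i\in\mathcal Y_i$ (convex constraint sets), $Dy=d$ (coupling), where $y_i=[y_i^1;\dots;y_i^N]$, $y_i^k=[u_i^k;w_i^k;x_i^{k+1}]$, $\mathcal Q_i=I_N\otimes\mathrm{diag}(R_i,0,Q_i)$, and $C_iy_i=c_i$ is the linear system $x_i^{k+1}=A_{ii}x_i^k+B_{ii}u_i^k+W_iw_i^k$, $k=1,\dots,N$ (initial state given). Algorithm SE is the ADMM scheme with subsystem penalty parameters $\rho_i>0$ and balancing parameter $\beta\in(0,1]$: (1) $y_i\leftarrow\arg\min_{C_iy_i=c_i}\tfrac12y_i^\top\mathcal Q_iy_i+q_i^\top y_i+\tfrac{\rho_i}2[\beta\|y_i-\zeta_i-\lambda_{\zeta_i}\|^2+(1-\beta)\|y_i-\epsilon_i-\lambda_{\epsilon_i}\|^2]$; (2) $\zeta_i\leftarrow\Pi_{\mathcal Y_i}(y_i-\lambda_{\zeta_i})$; (3) $\epsilon\leftarrow$ the projection of $y-\lambda_\epsilon$ onto $\{D\epsilon=d\}$ in the norm weighted by $(1-\beta)\mathrm{diag}(\rho_iI)$; (4) $\lambda_\zeta\leftarrow\lambda_\zeta-(y-\zeta)$, $\lambda_\epsilon\leftarrow\lambda_\epsilon-(y-\epsilon)$.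 Its worst-case convergence rate bound is governed by $\|\tilde{\mathcal M}\|_2$, where $\tilde{\mathcal M}=\mathrm{diag}_i\big(Z_i^\top\mathcal M_iZ_i-\tfrac12I\big)$ and $\mathcal M_i=Z_i\big(Z_i^\top(\tfrac1{\rho_i}\mathcal Q_i+I)Z_i\big)^{-1}Z_i^\top$; ''optimal'' means minimizing this quantity. $\operatorname{eig}_{\min},\operatorname{eig}_{\max}$ denote smallest and largest eigenvalues; $\|\cdot\|_2$ is the spectral norm. *)

From HB Require Import structures.
From mathcomp Require Import all_boot all_order all_algebra.
From mathcomp Require Import classical_sets reals.
Set Implicit Arguments. Unset Strict Implicit. Unset Printing Implicit Defensive.
Import Order.TTheory GRing.Theory Num.Theory.
Local Open Scope ring_scope.
Local Open Scope classical_set_scope.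

Section Defs.
Variable R : realType.

Definition vnorm2 n (x : 'cV[R]_n) : R := \sum_(j < n) (x j 0) ^+ 2.

Definition spec_norm m n (A : 'M[R]_(m, n)) : R :=
  sup [set Num.sqrt (vnorm2 (A *m x)) | x in [set x : 'cV[R]_n | vnorm2 x = 1]].

Definition qform n (A : 'M[R]_n) (x : 'cV[R]_n) : R := (x^T *m A *m x) 0 0.

Definition sym_psd n (A : 'M[R]_n) : Prop :=
  A^T = A /\ forall x : 'cV[R]_n, 0 <= qform A x.

Definition pos_def n (A : 'M[R]_n) : Prop :=
  A^T = A /\ forall x : 'cV[R]_n, x != 0 -> 0 < qform A x.

Definition full_row_rank p n (C : 'M[R]_(p, n)) : Prop := \rank C = p.

Definition orth_null_basis p n k (C : 'M[R]_(p, n)) (Z : 'M[R]_(n, k)) : Prop :=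
  [/\ Z^T *m Z = 1%:M, C *m Z = 0 &
      forall v : 'cV[R]_n, C *m v = 0 -> exists w : 'cV[R]_k, v = Z *m w].

Definition eig_min n (A : 'M[R]_n) : R := inf [set a : R | eigenvalue A a].
Definition eig_max n (A : 'M[R]_n) : R := sup [set a : R | eigenvalue A a].

Definition Theta n k (Q : 'M[R]_n) (Z : 'M[R]_(n, k)) (rho : R) : R :=
  spec_norm (invmx (Z^T *m (rho^-1 *: Q + 1%:M) *m Z) - 2^-1 *: 1%:M).

Definition Mtilde_norm (M : nat) (n k : 'I_M -> nat)
  (Q : forall i, 'M[R]_(n i)) (Z : forall i, 'M[R]_(n i, k i)) (rho : 'I_M -> R) : R :=
  \big[Num.max/0]_(i < M) Theta (Q i) (Z i) (rho i).

Definition rho_star n k (Q : 'M[R]_n) (Z : 'M[R]_(n, k)) : R :=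
  Num.sqrt (eig_min (Z^T *m Q *m Z) * eig_max (Z^T *m Q *m Z)).

End Defs.

From HB Require Import structures.
From mathcomp Require Import all_boot all_order all_algebra.
From mathcomp Require Import boolp classical_sets reals.
From mathcomp Require Import complex.
From mathcomp Require Import algebra_tactics.ring algebra_tactics.lra.
Set Implicit Arguments. Unset Strict Implicit. Unset Printing Implicit Defensive.
Import Order.TTheory GRing.Theory Num.Theory.
Local Open Scope ring_scope.
Local Open Scope classical_set_scope.
Local Open Scope sesquilinear_scope.

(* Put H := Z^T Q Z. Since Z^T Z = I, Theta(rho) is the spectral norm of the symmetric
   matrix (H/rho + I)^-1 - I/2, whose eigenvalues are g(l) = (1 - l/rho) / (2 (1 + l/rho))
   for l in the spectrum of H. As g is decreasing, Theta(rho) is the larger of |g(l_min)|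
   and |g(l_max)|, and this maximum is smallest when g(l_min) = -g(l_max), i.e. when
   rho^2 = l_min l_max; this choice involves H only, never beta.
   The bound Theta(rho) >= |g(l)| is read off an eigenvector. For the upper bound at rho*,
   writing x = (H/rho* + I) y turns |A x| <= g(l_min) |x| into a consequence of
   (H - l_min)(H - l_max) <= 0, which comes from the unitary diagonalisation of H over C. *)

Section OptimalPenalty.
Variable R : realType.

Lemma vnorm2E k (x : 'cV[R]_k) : vnorm2 x = (x^T *m x) 0 0.
Proof. by rewrite /vnorm2 mxE; apply: eq_bigr => j _; rewrite mxE expr2. Qed.

Lemma vnorm2_ge0 k (x : 'cV[R]_k) : 0 <= vnorm2 x.
Proof. by apply: sumr_ge0 => j _; exact: sqr_ge0. Qed.

Lemma vnorm2_gt0 k (x : 'cV[R]_k) : x != 0 -> 0 < vnorm2 x.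
Proof.
move=> xn0; rewrite lt_neqAle vnorm2_ge0 andbT.
apply: contra xn0 => /eqP/esym/psumr_eq0P x0.
apply/eqP/matrixP => i j; rewrite (ord1 j) mxE.
by apply/eqP; rewrite -sqrf_eq0; apply/eqP/x0 => // l _; exact: sqr_ge0.
Qed.

Lemma vnorm2Z k c (x : 'cV[R]_k) : vnorm2 (c *: x) = c ^+ 2 * vnorm2 x.
Proof. by rewrite /vnorm2 mulr_sumr; apply: eq_bigr => j _; rewrite mxE exprMn. Qed.

Lemma vnorm2DZ k (u v : 'cV[R]_k) c :
  vnorm2 (u + c *: v) = vnorm2 u + 2 * c * (u^T *m v) 0 0 + c ^+ 2 * vnorm2 v.
Proof.
rewrite /vnorm2 mxE !mulr_sumr -!big_split /=; apply: eq_bigr => j _.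
by rewrite !mxE; ring.
Qed.

Lemma pos_def_qform_ge0 k (H : 'M[R]_k) (y : 'cV[R]_k) : pos_def H -> 0 <= qform H y.
Proof.
case=> _ Hpd; have [->|/Hpd/ltW//] := eqVneq y 0.
by rewrite /qform mulmx0 mxE.
Qed.

Lemma mulmx_diag_entry (C : comNzRingType) k (r : 'rV[C]_k) (d : 'rV[C]_k) (w : 'cV[C]_k) :
  (r *m diag_mx d *m w) 0 0 = \sum_j r 0 j * d 0 j * w j 0.
Proof. by rewrite mxE; apply: eq_bigr => j _; rewrite mul_mx_diag mxE. Qed.

Lemma unitary_diag_pencilE (C : numClosedFieldType) k (P : 'M[C]_k) (d : 'rV[C]_k)
    (y : 'cV[C]_k) a b (D := invmx P *m diag_mx d *m P) :
  P \is unitarymx ->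
  (y^t* *m D *m D *m y) 0 0 - (a + b) * (y^t* *m D *m y) 0 0 + a * b * (y^t* *m y) 0 0
  = \sum_j `|(P *m y) j 0| ^+ 2 * ((d 0 j - a) * (d 0 j - b)).
Proof.
move=> Pu; have Punit := unitarymx_unit Pu; set w := P *m y.
have yE : y^t* = w^t* *m P by rewrite /w trmx_mul map_mxM -invmx_unitary // mulmxKV.
rewrite /D yE -!mulmxA !mulKVmx // !mulmxA -!(mulmxA _ P y) -/w.
rewrite (mulmx_diag_entry (w^t* *m diag_mx d)) !mulmx_diag_entry mxE.
rewrite !mulr_sumr -sumrB -big_split /=; apply: eq_bigr => j _.
rewrite mul_mx_diag !mxE normCK.
ring.
Qed.

Section RealSymmetricSpectrum.
Variables (k : nat) (H : 'M[R]_k).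
Hypothesis Hsym : H^T = H.

Local Notation toC := (real_complex R).
Let HC := map_mx toC H.

Let HC_sym : HC^T = HC.
Proof. by rewrite /HC map_trmx Hsym. Qed.

Let HC_herm : HC \is hermsymmx.
Proof.
apply/is_hermitianmxP; rewrite expr0 scale1r HC_sym.
by apply/matrixP => i j; rewrite !mxE /=; apply/esym; exact: conjc_real.
Qed.

Let P := spectralmx HC.
Let d := spectral_diag HC.
Let spectrum j := complex.Re (d 0 j).

Let HCE : HC = invmx P *m diag_mx d *m P.
Proof. exact/orthomx_spectralP/hermitian_normalmx. Qed.

Let P_unitary : P \is unitarymx. Proof. exact: spectral_unitarymx. Qed.

Let P_unit : P \in unitmx. Proof. exact: unitarymx_unit P_unitary. Qed.

Let dE j : d 0 j = toC (spectrum j).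
Proof. by rewrite RRe_real //; exact/(mxOverP (hermitian_spectral_diag_real HC_herm)). Qed.

Let eigenvalueC a : eigenvalue H a = eigenvalue HC (toC a).
Proof. by rewrite eigenvalue_map. Qed.

Let eigenvalue_spectrum a : eigenvalue H a -> exists j, a = spectrum j.
Proof.
rewrite eigenvalueC => /eigenvalueP [v vH vn0].
pose w := v *m invmx P.
have wD : w *m diag_mx d = toC a *: w.
  have := congr1 (mulmx^~ (invmx P)) vH.
  by rewrite /= {1}HCE !mulmxA mulmxK // -scalemxAl.
have wn0 : w != 0.
  by apply: contraNneq vn0 => w0; rewrite -(mulmxKV P_unit v) -/w w0 mul0mx.
have [j wj] : exists j, w 0 j != 0.
  apply/existsP; apply: contraNT wn0; rewrite negb_exists => /forallP w0.
  by apply/eqP/rowP => j; move: (w0 j); rewrite negbK => /eqP ->; rewrite mxE.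
clearbody w; exists j; apply: (@complexI R); rewrite -dE.
by move/rowP: wD => /(_ j); rewrite mul_mx_diag !mxE mulrC => /(mulIf wj).
Qed.

Let spectrum_eigenvalue j : eigenvalue H (spectrum j).
Proof.
rewrite eigenvalueC -dE; apply/eigenvalueP; exists (row j P).
  rewrite {1}HCE !mulmxA -row_mul mulmxV // row1 /=.
  have -> : ('e_j : 'rV[R[i]]_k) *m diag_mx d = d 0 j *: 'e_j.
    apply/rowP => i; rewrite mul_mx_diag !mxE.
    by case: (i =P j) => [->|_]; rewrite ?eqxx /= ?mulr1 ?mul1r ?mulr0 ?mul0r.
  by rewrite -scalemxAl -rowE.
apply: contraTneq isT => Pj0.
have : row j (P *m invmx P) = 0 by rewrite row_mul Pj0 mul0mx.
rewrite mulmxV // row1 => /(congr1 (fun m : 'rV[R[i]]_k => m 0 j)).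
by rewrite !mxE !eqxx /= => /eqP; rewrite oner_eq0.
Qed.

Lemma sym_pencil_le0 (y : 'cV[R]_k) al be :
  (forall a, eigenvalue H a -> al <= a <= be) ->
  vnorm2 (H *m y) - (al + be) * qform H y + al * be * vnorm2 y <= 0.
Proof.
move=> spec_in; rewrite -lecR rmorph0 /qform !vnorm2E.
have toCE (B : 'M[R]_1) : toC (B 0 0) = (map_mx toC B) 0 0 by rewrite mxE.
rewrite rmorphD rmorphB !rmorphM rmorphD /= !toCE.
rewrite !map_mxM -!map_trmx !map_mxM -/HC trmx_mul HC_sym !mulmxA.
set yC := map_mx toC y.
have -> : yC^T = yC^t* by apply/matrixP => i j; rewrite !mxE /=; apply/esym/conjc_real.
rewrite HCE unitary_diag_pencilE //; apply: sumr_le0 => j _.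
rewrite dE -!rmorphB -rmorphM; apply: mulr_ge0_le0; first exact: exprn_ge0.
have /andP[al_le be_ge] := spec_in _ (spectrum_eigenvalue j).
by rewrite -(rmorph0 toC) lecR mulr_ge0_le0 ?subr_ge0 ?subr_le0.
Qed.

Lemma sym_eig_minP : (0 < k)%N ->
  eigenvalue H (eig_min H) /\ forall a, eigenvalue H a -> eig_min H <= a.
Proof.
move=> k_gt0; have [j1 _ min_j1] := @arg_minP _ _ _ (Ordinal k_gt0) xpredT spectrum isT.
have lb a : eigenvalue H a -> spectrum j1 <= a.
  by move=> /eigenvalue_spectrum [j ->]; exact: min_j1.
suff -> : eig_min H = spectrum j1 by split; [exact: spectrum_eigenvalue | exact: lb].
have ne : [set a | eigenvalue H a] (spectrum j1) := spectrum_eigenvalue j1.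
apply/le_anti/andP; split; last exact: lb_le_inf (ex_intro _ _ ne) lb.
by apply: (ge_inf _ ne); exists (spectrum j1).
Qed.

Lemma sym_eig_maxP : (0 < k)%N ->
  eigenvalue H (eig_max H) /\ forall a, eigenvalue H a -> a <= eig_max H.
Proof.
move=> k_gt0; have [j2 _ max_j2] := @arg_maxP _ _ _ (Ordinal k_gt0) xpredT spectrum isT.
have ub a : eigenvalue H a -> a <= spectrum j2.
  by move=> /eigenvalue_spectrum [j ->]; exact: max_j2.
suff -> : eig_max H = spectrum j2 by split; [exact: spectrum_eigenvalue | exact: ub].
have ne : [set a | eigenvalue H a] (spectrum j2) := spectrum_eigenvalue j2.
apply/le_anti/andP; split; first exact: ge_sup (ex_intro _ _ ne) ub.
by apply: (sup_upper_bound _ ne); split; exists (spectrum j2).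
Qed.

End RealSymmetricSpectrum.

Lemma sym_eigenvector k (H : 'M[R]_k) l : H^T = H -> eigenvalue H l ->
  exists2 u : 'cV[R]_k, H *m u = l *: u & u != 0.
Proof.
move=> Hsym /eigenvalueP [v vH vn0]; exists v^T.
  by rewrite -{1}Hsym -trmx_mul vH linearZ.
by apply: contra vn0 => /eqP v0; rewrite -(trmxK v) v0 trmx0.
Qed.

Lemma pos_def_eigenvalue_gt0 k (H : 'M[R]_k) l : pos_def H -> eigenvalue H l -> 0 < l.
Proof.
move=> Hpd /(sym_eigenvector Hpd.1) [u Hu un0].
have := Hpd.2 _ un0; rewrite /qform -mulmxA Hu -scalemxAr mxE -vnorm2E.
by rewrite pmulr_lgt0 // vnorm2_gt0.
Qed.

Section SpectralNorm.
Variables (m n : nat) (A : 'M[R]_(m, n)).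

Lemma spec_norm_le c : 0 <= c -> (forall x, vnorm2 (A *m x) <= c ^+ 2 * vnorm2 x) ->
  spec_norm A <= c.
Proof.
move=> c_ge0 bound; rewrite /spec_norm.
have [[x0 x01]|no_unit] := pselect (exists x : 'cV[R]_n, vnorm2 x = 1).
  apply: ge_sup; first by exists (Num.sqrt (vnorm2 (A *m x0))), x0.
  move=> _ [x /= x1 <-]; rewrite -(ger0_norm c_ge0) -sqrtr_sqr ler_sqrt ?sqr_ge0 //.
  by rewrite -[X in _ <= X]mulr1 -x1 bound.
(* no unit vectors (n = 0): the defining set is empty and [sup] returns 0 *)
suff -> : [set Num.sqrt (vnorm2 (A *m x)) | x in [set x | vnorm2 x = 1]] = set0 by rewrite sup0.
by apply/seteqP; split => // r [x x1 _]; case: no_unit; exists x.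
Qed.

End SpectralNorm.

Lemma spec_norm_eigenvector_ge k (A : 'M[R]_k) c (u : 'cV[R]_k) l :
  (forall x, vnorm2 (A *m x) <= c * vnorm2 x) ->
  A *m u = l *: u -> u != 0 -> `|l| <= spec_norm A.
Proof.
move=> bound Au un0; pose x := (Num.sqrt (vnorm2 u))^-1 *: u.
have x1 : vnorm2 x = 1.
  by rewrite vnorm2Z exprVn sqr_sqrtr ?vnorm2_ge0 // mulVf // gt_eqF // vnorm2_gt0.
have Ax : Num.sqrt (vnorm2 (A *m x)) = `|l|.
  by rewrite -scalemxAr Au scalerA mulrC -scalerA vnorm2Z x1 mulr1 sqrtr_sqr.
rewrite -Ax /spec_norm; apply: sup_upper_bound; last by exists x.
split; first by exists `|l|, x.
exists (Num.sqrt (Num.max c 0)) => _ [y /= y1 <-]; rewrite ler_sqrt ?le_max ?lexx ?orbT //.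
by rewrite -[X in _ <= X]mulr1 -y1 (le_trans (bound y)) // ler_wpM2r ?vnorm2_ge0 ?le_max ?lexx.
Qed.

Definition half_cayley (s l : R) := (1 - s * l) / (2 * (1 + s * l)).

Lemma half_cayley_ge0 s l : 0 <= s -> 0 <= l -> s * l <= 1 -> 0 <= half_cayley s l.
Proof.
move=> s_ge0 l_ge0 sl_le1; have sl_ge0 := mulr_ge0 s_ge0 l_ge0.
by rewrite /half_cayley divr_ge0 ?mulr_ge0; lra.
Qed.

(* [a], [b], [e] stand for |y|^2, y^T H y and |H y|^2; the last hypothesis is the
   pencil inequality of [sym_pencil_le0] for the extreme eigenvalues [l1], [l2]. *)
Lemma half_cayley_balanced_bound (a b e t l1 l2 : R) : 0 < t -> 0 < l1 -> 0 <= b ->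
  t ^+ 2 * (l1 * l2) = 1 -> e <= (l1 + l2) * b - l1 * l2 * a ->
  4^-1 * (a - 2 * t * b + t ^+ 2 * e) <=
  half_cayley t l1 ^+ 2 * (a + 2 * t * b + t ^+ 2 * e).
Proof.
move=> t_gt0 l1_gt0 b_ge0 tl he.
set x := t * l1; have x_gt0 : 0 < x by rewrite mulr_gt0.
set N := a + 2 * t * b + t ^+ 2 * e; set D := a - 2 * t * b + t ^+ 2 * e.
have key : D * (1 + x) ^+ 2 <= (1 - x) ^+ 2 * N.
  rewrite -subr_ge0; have -> : (1 - x) ^+ 2 * N - D * (1 + x) ^+ 2
      = 4 * t * (1 - t ^+ 2 * (l1 * l2)) * (b - l1 * a)
        + 4 * t ^+ 3 * l1 * ((l1 + l2) * b - l1 * l2 * a - e) :> R.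
    by rewrite /x /N /D; ring.
  rewrite tl subrr mulr0 mul0r add0r.
  by rewrite mulr_ge0 ?subr_ge0 // !mulr_ge0 ?exprn_ge0 ?ltW.
have d_gt0 : 0 < 4 * (1 + x) ^+ 2 by rewrite mulr_gt0 ?exprn_gt0 //; lra.
have -> : 4^-1 * D = D * (1 + x) ^+ 2 / (4 * (1 + x) ^+ 2).
  by field; rewrite lt0r_neq0 //; lra.
have -> : half_cayley t l1 ^+ 2 * N = (1 - x) ^+ 2 * N / (4 * (1 + x) ^+ 2).
  rewrite /half_cayley -/x expr_div_n exprMn mulrAC; congr (_ * _ / (_ * _)).
  by rewrite expr2 -natrM.
by rewrite ler_wpM2r // invr_ge0 ltW.
Qed.

Lemma half_cayley_minimax (t s l1 l2 : R) : 0 < t -> 0 < s -> 0 < l1 -> l1 <= l2 ->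
  t ^+ 2 * (l1 * l2) = 1 ->
  half_cayley t l1 <= Num.max `|half_cayley s l1| `|half_cayley s l2|.
Proof.
move=> t_gt0 s_gt0 l1_gt0 l12 tl.
have l2_gt0 : 0 < l2 by apply: lt_le_trans l12.
have p1 : 0 < 1 + t * l1 by have := mulr_gt0 t_gt0 l1_gt0; lra.
have p2 : 0 < 1 + s * l1 by have := mulr_gt0 s_gt0 l1_gt0; lra.
have p3 : 0 < 1 + s * l2 by have := mulr_gt0 s_gt0 l2_gt0; lra.
rewrite le_max; apply/orP; have [st|ts] := lerP s t.
  left; apply: le_trans (ler_norm _).
  have -> : half_cayley s l1 = half_cayley t l1 + l1 * (t - s) / ((1 + s * l1) * (1 + t * l1)).
    by rewrite /half_cayley; field; rewrite !lt0r_neq0.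
  by rewrite lerDl divr_ge0 ?mulr_ge0 ?subr_ge0 // ltW.
right; rewrite ler_normr; apply/orP; right.
have -> : - half_cayley s l2 = half_cayley t l1
    + (s * t * (l1 * l2) - 1) / ((1 + s * l2) * (1 + t * l1)).
  by rewrite /half_cayley; field; rewrite !lt0r_neq0.
rewrite lerDl divr_ge0 //; last by rewrite mulr_ge0 // ltW.
rewrite subr_ge0 -tl; apply: ler_wpM2r; first by rewrite mulr_ge0 // ltW.
by rewrite expr2; apply: ler_wpM2r; apply: ltW.
Qed.

Section ShiftedResolvent.
Variables (k : nat) (H : 'M[R]_k) (s : R).
Hypotheses (Hpd : pos_def H) (s_gt0 : 0 < s).

Local Notation G := (s *: H + 1%:M).
Local Notation A := (invmx G - 2^-1 *: (1%:M : 'M[R]_k)).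

Lemma mulmx_shifted (y : 'cV[R]_k) : G *m y = y + s *: (H *m y).
Proof. by rewrite mulmxDl mul1mx -scalemxAl addrC. Qed.

Lemma unitmx_shifted : G \in unitmx.
Proof.
rewrite -row_free_unit -kermx_eq0.
suff : ~~ eigenvalue G 0.
  rewrite /eigenvalue negbK /eigenspace => /eqP <-.
  by rewrite [0%:M](_ : _ = 0) ?subr0 //; apply/matrixP => i j; rewrite !mxE mul0rn.
apply/eigenvalueP => -[v vG vn0].
have vTn0 : v^T != 0 by apply: contra vn0 => /eqP v0; rewrite -(trmxK v) v0 trmx0.
have qG0 : qform G v^T = 0 by rewrite /qform trmxK vG scale0r mul0mx mxE.
have : qform G v^T = vnorm2 v^T + s * qform H v^T.
  by rewrite /qform vnorm2E -mulmxA mulmx_shifted mulmxDr -scalemxAr mulmxA !mxE.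
rewrite qG0 => /esym/eqP; rewrite gt_eqF // ltr_pwDl ?vnorm2_gt0 //.
by rewrite mulr_ge0 ?(ltW s_gt0) ?pos_def_qform_ge0.
Qed.

Lemma resolvent_mul_shifted (y : 'cV[R]_k) : A *m (G *m y) = 2^-1 *: (y - s *: (H *m y)).
Proof.
rewrite mulmxBl mulKmx ?unitmx_shifted // -scalemxAl mul1mx mulmx_shifted.
by apply/matrixP => i j; rewrite !mxE; field.
Qed.

Lemma vnorm2_mul_shifted (y : 'cV[R]_k) :
  vnorm2 (G *m y) = vnorm2 y + 2 * s * qform H y + s ^+ 2 * vnorm2 (H *m y).
Proof. by rewrite mulmx_shifted vnorm2DZ /qform mulmxA. Qed.

Lemma vnorm2_resolvent_mul_shifted (y : 'cV[R]_k) :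
  vnorm2 (A *m (G *m y)) = 4^-1 * (vnorm2 y - 2 * s * qform H y + s ^+ 2 * vnorm2 (H *m y)).
Proof.
rewrite resolvent_mul_shifted vnorm2Z -scaleNr vnorm2DZ /qform mulmxA sqrrN.
by rewrite exprVn expr2 -natrM; congr (_ * _); ring.
Qed.

Lemma vnorm2_resolvent_le (x : 'cV[R]_k) : vnorm2 (A *m x) <= 2^-1 ^+ 2 * vnorm2 x.
Proof.
rewrite -(mulKVmx unitmx_shifted x) vnorm2_resolvent_mul_shifted vnorm2_mul_shifted.
set y := invmx G *m x; have : 0 <= 2 * s * qform H y.
  by rewrite !mulr_ge0 ?ler0n ?(ltW s_gt0) ?pos_def_qform_ge0.
have -> : (2^-1 : R) ^+ 2 = 4^-1 by rewrite exprVn expr2 -natrM.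
rewrite ler_pM2l ?invr_gt0 ?ltr0n //; lra.
Qed.

Lemma resolvent_eigenvector (u : 'cV[R]_k) l : 0 <= l -> H *m u = l *: u ->
  A *m u = half_cayley s l *: u.
Proof.
move=> l_ge0 Hu; have sl_neq0 : 1 + s * l != 0.
  by rewrite lt0r_neq0 //; have := mulr_ge0 (ltW s_gt0) l_ge0; lra.
have uE : u = G *m ((1 + s * l)^-1 *: u).
  rewrite mulmx_shifted -scalemxAr Hu !scalerA -scalerDl -[LHS]scale1r; congr (_ *: _).
  by field.
rewrite {1}uE resolvent_mul_shifted -scalemxAr Hu !scalerA -scalerBl scalerA /half_cayley.
by congr (_ *: _); field.
Qed.

Lemma spec_norm_resolvent_ge l : eigenvalue H l -> `|half_cayley s l| <= spec_norm A.
Proof.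
move=> Hl; have [u Hu un0] := sym_eigenvector Hpd.1 Hl.
apply: spec_norm_eigenvector_ge vnorm2_resolvent_le _ un0.
exact/resolvent_eigenvector/Hu/ltW/(pos_def_eigenvalue_gt0 Hpd).
Qed.

Lemma spec_norm_resolvent_le l1 l2 : 0 < l1 -> l1 <= l2 -> s ^+ 2 * (l1 * l2) = 1 ->
  (forall a, eigenvalue H a -> l1 <= a <= l2) -> spec_norm A <= half_cayley s l1.
Proof.
move=> l1_gt0 l12 sl spec_in.
have sl1_le1 : s * l1 <= 1.
  rewrite -(ler_pXn2r (_ : (0 < 2)%N)) ?nnegrE ?mulr_ge0 ?(ltW s_gt0) ?(ltW l1_gt0) //.
  by rewrite expr1n -sl exprMn ler_pM2l ?exprn_gt0 // expr2 ler_pM2l.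
apply: spec_norm_le; first exact: half_cayley_ge0 (ltW s_gt0) (ltW l1_gt0) sl1_le1.
move=> x; rewrite -(mulKVmx unitmx_shifted x) vnorm2_resolvent_mul_shifted vnorm2_mul_shifted.
apply: (half_cayley_balanced_bound s_gt0 l1_gt0 (pos_def_qform_ge0 _ Hpd) sl).
have pencil_le (a b e : R) : e - (l1 + l2) * b + l1 * l2 * a <= 0 ->
  e <= (l1 + l2) * b - l1 * l2 * a by move=> ?; lra.
exact/pencil_le/(sym_pencil_le0 Hpd.1 _ spec_in).
Qed.

End ShiftedResolvent.

Lemma ThetaE n k (Q : 'M[R]_n) (Z : 'M[R]_(n, k)) rho : Z^T *m Z = 1%:M ->
  Theta Q Z rho = spec_norm (invmx (rho^-1 *: (Z^T *m Q *m Z) + 1%:M) - 2^-1 *: 1%:M).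
Proof. by move=> ZZ; rewrite /Theta mulmxDr mulmxDl mulmx1 ZZ -scalemxAr -scalemxAl. Qed.

Section OptimalBlock.
Variables (n k : nat) (Q : 'M[R]_n) (Z : 'M[R]_(n, k)).
Hypotheses (k_gt0 : (0 < k)%N) (Hpd : pos_def (Z^T *m Q *m Z)).
Local Notation H := (Z^T *m Q *m Z).

Lemma rho_star_gt0 : 0 < rho_star Q Z.
Proof.
have [min_eig _] := sym_eig_minP Hpd.1 k_gt0.
have [max_eig _] := sym_eig_maxP Hpd.1 k_gt0.
by rewrite sqrtr_gt0 mulr_gt0 ?(pos_def_eigenvalue_gt0 Hpd).
Qed.

Lemma Theta_rho_star_le rho : Z^T *m Z = 1%:M -> 0 < rho ->
  Theta Q Z (rho_star Q Z) <= Theta Q Z rho.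
Proof.
move=> ZZ rho_gt0; rewrite !ThetaE //.
have [min_eig min_le] := sym_eig_minP Hpd.1 k_gt0.
have [max_eig max_ge] := sym_eig_maxP Hpd.1 k_gt0.
have min_gt0 := pos_def_eigenvalue_gt0 Hpd min_eig.
have min_le_max := max_ge _ min_eig.
have spec_in a : eigenvalue H a -> eig_min H <= a <= eig_max H.
  by move=> a_eig; rewrite min_le ?max_ge.
have t_gt0 : 0 < (rho_star Q Z)^-1 by rewrite invr_gt0 rho_star_gt0.
have max_gt0 : 0 < eig_max H by apply: lt_le_trans min_le_max.
have prod_gt0 := mulr_gt0 min_gt0 max_gt0.
have balanced : (rho_star Q Z)^-1 ^+ 2 * (eig_min H * eig_max H) = 1.
  by rewrite exprVn sqr_sqrtr ?(ltW prod_gt0) // mulVf // gt_eqF.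
apply: (le_trans (spec_norm_resolvent_le Hpd t_gt0 min_gt0 min_le_max balanced spec_in)).
have s_gt0 : 0 < rho^-1 by rewrite invr_gt0.
apply: (le_trans (half_cayley_minimax t_gt0 s_gt0 min_gt0 min_le_max balanced)).
by rewrite ge_max !(spec_norm_resolvent_ge Hpd s_gt0).
Qed.

End OptimalBlock.

End OptimalPenalty.

Theorem proposition2 (R : realType) (M : nat) (n p k : 'I_M -> nat)
  (Q : forall i, 'M[R]_(n i)) (C : forall i, 'M[R]_(p i, n i))
  (Z : forall i, 'M[R]_(n i, k i)) (beta : R) :
  (forall i, sym_psd (Q i)) ->
  (forall i, full_row_rank (C i)) ->
  (forall i, orth_null_basis (C i) (Z i)) ->
  (forall i, (0 < k i)%N) ->
  (forall i, pos_def ((Z i)^T *m Q i *m Z i)) ->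
  0 < beta < 1 ->
  (forall i, 0 < rho_star (Q i) (Z i)) /\
  (forall rho : 'I_M -> R, (forall i, 0 < rho i) ->
     Mtilde_norm Q Z (fun i => rho_star (Q i) (Z i)) <= Mtilde_norm Q Z rho).
Proof.
move=> _ _ Z_orth k_gt0 Hpd _; split=> [i | rho rho_gt0]; first exact: rho_star_gt0.
apply: le_bigmax2 => i _; apply: Theta_rho_star_le => //.
by case: (Z_orth i).
Qed.
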